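(* Let $\Gamma=(V,E)$ be a simple graph of order $n$ and let $\lambda$ be the spectral radius of $\Gamma$. Then the global defensive alliance number of $\Gamma$ satisfies $$\gamma_{a}(\Gamma)\ge \left\lceil\frac{n}{\lambda+2}\right\rceil$$ and the global strong defensive alliance number of $\Gamma$ satisfies $$\gamma_{\hat{a}}(\Gamma)\ge \left\lceil\frac{n}{\lambda+1}\right\rceil.$$
   Context: For $S\subseteq V$ and $v\in V$, $N_S(v)=\{u\in S: u\sim v\}$ and $N_{V\setminus S}(v)=\{u\in V\setminus S: u\sim v\}$. A nonempty set $S\subseteq V$ is a defensive alliance if $|N_S(v)|+1\ge |N_{V\setminus S}(v)|$ for every $v\in S$, and a strong defensive alliance if $|N_S(v)|\ge |N_{V\setminus S}(v)|$ for every $v\in S$. A (strong) defensive alliance is global if it is a dominating set, i.e. every vertex of $V\setminus S$ is adjacent to some vertex of $S$. $\gamma_a(\Gamma)$ (resp. $\gamma_{\hat a}(\Gamma)$) is the minimum cardinality of a global defensive (resp. global strong defensive) alliance. The spectral radius is the largest eigenvalue of the adjacency matrix of $\Gamma$. *)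

From HB Require Import structures.
From mathcomp Require Import all_boot all_order all_algebra.
From mathcomp Require Import reals.
Set Implicit Arguments. Unset Strict Implicit. Unset Printing Implicit Defensive.
Import Order.TTheory GRing.Theory Num.Theory.
Local Open Scope ring_scope.

Definition simple_graph (n : nat) (e : rel 'I_n) : Prop :=
  symmetric e /\ irreflexive e.

Definition nbhd_in (n : nat) (e : rel 'I_n) (S : {set 'I_n}) (v : 'I_n) : {set 'I_n} :=
  [set u in S | e u v].

Definition defensive_alliance (n : nat) (e : rel 'I_n) (S : {set 'I_n}) : bool :=
  (S != set0) &&
  [forall v in S, #|nbhd_in e (~: S) v| <= #|nbhd_in e S v| + 1]%N.

Definition strong_defensive_alliance (n : nat) (e : rel 'I_n) (S : {set 'I_n}) : bool :=
  (S != set0) &&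
  [forall v in S, #|nbhd_in e (~: S) v| <= #|nbhd_in e S v|]%N.

Definition dominating (n : nat) (e : rel 'I_n) (S : {set 'I_n}) : bool :=
  [forall v in ~: S, [exists u in S, e u v]].

Definition global_defensive_alliance n (e : rel 'I_n) S :=
  defensive_alliance e S && dominating e S.
Definition global_strong_defensive_alliance n (e : rel 'I_n) S :=
  strong_defensive_alliance e S && dominating e S.

(* Minimum cardinality; the default n is attained by V itself whenever n > 0. *)
Definition gamma_a (n : nat) (e : rel 'I_n) : nat :=
  \big[minn/n]_(S : {set 'I_n} | global_defensive_alliance e S) #|S|.
Definition gamma_sa (n : nat) (e : rel 'I_n) : nat :=
  \big[minn/n]_(S : {set 'I_n} | global_strong_defensive_alliance e S) #|S|.

Definition adjacency_matrix (R : nzRingType) (n : nat) (e : rel 'I_n) : 'M[R]_n :=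
  \matrix_(i, j) (e i j)%:R.

Definition is_spectral_radius (R : realType) (n : nat) (e : rel 'I_n) (lam : R) : Prop :=
  eigenvalue (adjacency_matrix R e) lam /\
  forall mu : R, eigenvalue (adjacency_matrix R e) mu -> mu <= lam.

From HB Require Import structures.
From mathcomp Require Import all_boot all_order all_algebra.
From mathcomp Require Import reals.
From mathcomp.real_closed Require Import complex.
From mathcomp Require Import lra.

Set Implicit Arguments.
Unset Strict Implicit.
Unset Printing Implicit Defensive.
Import Order.TTheory GRing.Theory Num.Theory.
Local Open Scope ring_scope.

(* For a set S, the quadratic form of the adjacency matrix A at the indicator
   vector of S counts the ordered edges inside S, so the Rayleigh bound
   x A x^T <= lam x x^T gives  sum_(v in S) |N_S(v)| <= lam |S|.  If S is a
   dominating set, every vertex outside S has a neighbour in S, hence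
   |V \ S| <= sum_(v in S) |N_(V\S)(v)|, and the alliance condition bounds the
   latter by  sum_(v in S) |N_S(v)| + b |S| <= (lam + b) |S|, with b = 1 for
   defensive and b = 0 for strong defensive alliances.  Adding |S| gives
   n <= (lam + b + 1) |S|. *)

Section RayleighBound.
Local Open Scope sesquilinear_scope.
Local Open Scope complex_scope.

Lemma eigenvalue_map_real_complex (R : rcfType) n (A : 'M[R]_n) (a : R) :
  eigenvalue (map_mx (real_complex R) A) a%:C -> eigenvalue A a.
Proof. by rewrite !eigenvalue_root_char -map_char_poly fmorph_root. Qed.

Lemma spectral_diag_eigenvalue (C : numClosedFieldType) n (A : 'M[C]_n) i :
  A \is normalmx -> eigenvalue A (spectral_diag A 0 i).
Proof.
move=> /orthomx_spectralP AE; set P := spectralmx A in AE.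
have Punit : P \in unitmx by apply: spectral_unit.
apply/eigenvalueP; exists (row i P).
  rewrite -row_mul {1}AE !mulmxA mulmxV // mul1mx mul_diag_mx.
  by apply/rowP => j; rewrite !mxE.
apply/negP => /eqP /(congr1 (mulmx^~ (invmx P))).
rewrite mul0mx -row_mul mulmxV // => /rowP /(_ i).
by rewrite !mxE eqxx /= => /eqP; rewrite oner_eq0.
Qed.

Lemma hermitian_quadratic_form_le (C : numClosedFieldType) n (A : 'M[C]_n) l :
  A \is hermsymmx ->
  (forall a, eigenvalue A a -> a \is Num.real -> a <= l) ->
  forall x : 'rV_n, (x *m A *m x ^t*) 0 0 <= l * (x *m x ^t*) 0 0.
Proof.
move=> Aher le_l x.
have Anormal := hermitian_normalmx Aher.
have dreal := hermitian_spectral_diag_real Aher.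
have /orthomx_spectralP := Anormal.
set P := spectralmx A; set d := spectral_diag A => AE.
have PV : invmx P = P ^t* by apply/invmx_unitary/spectral_unitarymx.
have PtP : P ^t* *m P = 1%:M by rewrite -PV mulVmx ?spectral_unit.
have d_le i : d 0 i <= l.
  exact: le_l (spectral_diag_eigenvalue i Anormal) (mxOverP dreal 0 i).
set y := x *m P ^t*.
have -> : x *m A *m x ^t* = y *m diag_mx d *m y ^t*.
  by rewrite AE PV /y trmx_mul map_mxM /= trmxCK !mulmxA.
have -> : x *m x ^t* = y *m y ^t*.
  by rewrite /y trmx_mul map_mxM /= trmxCK mulmxA -(mulmxA x) PtP mulmx1.
rewrite mul_mx_diag !mxE mulr_sumr; apply: ler_sum => i _.
rewrite !mxE -mulrA mulrCA [l * _]mulrC mulrC -subr_ge0 -mulrBl.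
by rewrite mulr_ge0 ?mul_conjC_ge0 ?subr_ge0.
Qed.

(* Transfer to C := R[i], where the real symmetric A becomes hermitian. *)
Lemma symmetric_quadratic_form_le (R : rcfType) n (A : 'M[R]_n) (l : R) :
  A^T = A -> (forall a, eigenvalue A a -> a <= l) ->
  forall x : 'rV_n, (x *m A *m x^T) 0 0 <= l * (x *m x^T) 0 0.
Proof.
move=> AT le_l x; set f := real_complex R.
have conj_f r : Num.conj (f r) = f r by apply: conj_Creal; rewrite complex_real.
have conjT_f m k (M : 'M[R]_(m, k)) : (map_mx f M) ^t* = map_mx f M^T.
  by apply/matrixP => i j; rewrite !mxE conj_f.
have Aher : map_mx f A \is hermsymmx.
  by apply/is_hermitianmxP; rewrite expr0 scale1r conjT_f AT.
have := @hermitian_quadratic_form_le _ _ _ (l%:C) Aher _ (map_mx f x).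
rewrite !conjT_f -!map_mxM !mxE -rmorphM lecR; apply.
move=> a eig_a a_real.
have aE : a = (complex.Re a)%:C.
  by move: a_real; case: a {eig_a} => ar ai; rewrite complex_real => /eqP ->.
by rewrite aE lecR; apply/le_l/eigenvalue_map_real_complex; rewrite -aE.
Qed.

End RayleighBound.

Lemma big_minn_ge (I : finType) (P : pred I) (F : I -> nat) (d : nat) (c : int) :
  c <= d%:Z -> (forall i, P i -> c <= (F i)%:Z) ->
  c <= (\big[minn/d]_(i | P i) F i)%:Z.
Proof.
move=> c_le_d c_le_F; apply: (big_ind (fun k : nat => c <= k%:Z)) => //.
by move=> a b ca cb; rewrite /minn; case: ltnP.
Qed.

Lemma ceil_div_le (R : realType) (t : R) (m k : nat) :
  0 < t -> m%:R <= t * k%:R -> Num.ceil (m%:R / t) <= k%:Z.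
Proof. by move=> t_gt0 le_mk; rewrite ceil_le_int -pmulrn ler_pdivrMr // mulrC. Qed.

Section AllianceBound.
Variables (n : nat) (e : rel 'I_n).
Hypothesis e_sym : symmetric e.

Lemma dominating_card_setC_le (S : {set 'I_n}) :
  dominating e S -> (#|~: S| <= \sum_(v in S) #|nbhd_in e (~: S) v|)%N.
Proof.
move=> /forall_inP dom; rewrite -sum1_card.
apply: (@leq_trans (\sum_(u in ~: S) \sum_(v in S) (e v u : nat))).
  apply: leq_sum => u uS; have /exists_inP [v vS evu] := dom u uS.
  by rewrite (bigD1 v) //= evu.
rewrite exchange_big /=; apply: leq_sum => v _.
rewrite -sum1_card (eq_bigl (fun u => (u \in ~: S) && e u v)) => [|u]; last first.
  by rewrite inE.
by rewrite [X in (_ <= X)%N]big_mkcondr /=; apply: leq_sum => u _; rewrite e_sym.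
Qed.

Lemma sum_nbhd_in_setC_le (S : {set 'I_n}) (b : nat) :
  (forall v, v \in S -> #|nbhd_in e (~: S) v| <= #|nbhd_in e S v| + b)%N ->
  (\sum_(v in S) #|nbhd_in e (~: S) v|
     <= \sum_(v in S) #|nbhd_in e S v| + b * #|S|)%N.
Proof.
move=> le_b; rewrite -sum1_card big_distrr /= muln1 -big_split /=.
exact: leq_sum.
Qed.

Variables (R : realType) (lam : R).
Hypothesis lam_spec : is_spectral_radius e lam.

Lemma adjacency_quadratic_form_indicator (S : {set 'I_n}) :
  let x := \row_i ((i \in S)%:R : R) in
  (x *m adjacency_matrix R e *m x^T) 0 0 = (\sum_(v in S) #|nbhd_in e S v|)%:R.
Proof.
move=> x; rewrite !mxE natr_sum [RHS]big_mkcond /=; apply: eq_bigr => j _.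
rewrite !mxE; case: (j \in S); rewrite ?mulr1 ?mulr0 //.
rewrite -sum1_card natr_sum [RHS]big_mkcond /=; apply: eq_bigr => i _.
by rewrite !mxE inE; case: (i \in S); case: (e i j); rewrite ?mulr1 ?mulr0 ?mul0r.
Qed.

Lemma indicator_quadratic_form (S : {set 'I_n}) :
  let x := \row_i ((i \in S)%:R : R) in (x *m x^T) 0 0 = #|S|%:R.
Proof.
move=> x; rewrite !mxE -sum1_card natr_sum [RHS]big_mkcond /=.
by apply: eq_bigr => j _; rewrite !mxE; case: (j \in S); rewrite ?mulr1 ?mulr0.
Qed.

Lemma sum_nbhd_in_le_spectral_radius (S : {set 'I_n}) :
  (\sum_(v in S) #|nbhd_in e S v|)%:R <= lam * #|S|%:R.
Proof.
have AT : (adjacency_matrix R e)^T = adjacency_matrix R e.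
  by apply/matrixP => i j; rewrite !mxE e_sym.
have := symmetric_quadratic_form_le AT lam_spec.2 (\row_i ((i \in S)%:R : R)).
by rewrite adjacency_quadratic_form_indicator indicator_quadratic_form.
Qed.

Lemma spectral_radius_ge0 : 0 <= lam.
Proof.
have [v _ v_neq0] := eigenvalueP lam_spec.1.
have [n_eq0 | n_gt0] := posnP n.
  by move: v_neq0; rewrite n_eq0 in v * => {n_eq0}; rewrite (thinmx0 v) eqxx.
have := sum_nbhd_in_le_spectral_radius [set Ordinal n_gt0].
by rewrite cards1 mulr1; apply: le_trans.
Qed.

Lemma card_le_alliance_bound (S : {set 'I_n}) (b : nat) :
  dominating e S ->
  (forall v, v \in S -> #|nbhd_in e (~: S) v| <= #|nbhd_in e S v| + b)%N ->
  n%:R <= (lam + b.+1%:R) * #|S|%:R.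
Proof.
move=> dom le_b.
have le_n : (n <= \sum_(v in S) #|nbhd_in e S v| + b * #|S| + #|S|)%N.
  rewrite -{1}(card_ord n) -(cardsC S) addnC leq_add2r.
  exact: leq_trans (dominating_card_setC_le dom) (sum_nbhd_in_setC_le le_b).
have := sum_nbhd_in_le_spectral_radius S.
move: le_n; rewrite -(ler_nat R) !natrD natrM => le_n le_lam.
by apply: (le_trans le_n); rewrite -natr1 !mulrDl mul1r; lra.
Qed.

Lemma alliance_number_ge (b : nat) (P : pred {set 'I_n}) :
  (forall S, P S -> dominating e S /\
     (forall v, v \in S -> #|nbhd_in e (~: S) v| <= #|nbhd_in e S v| + b)%N) ->
  Num.ceil (n%:R / (lam + b.+1%:R)) <= (\big[minn/n]_(S | P S) #|S|)%:Z.
Proof.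
move=> alliance_P.
have t_gt0 : 0 < lam + b.+1%:R by apply: ltr_wpDl spectral_radius_ge0 _.
(* The bound must also hold for the default value n of the minimum. *)
apply: big_minn_ge => [|S /alliance_P [dom le_b]]; apply: ceil_div_le => //.
  rewrite -[X in X <= _]mul1r ler_wpM2r //.
  have := spectral_radius_ge0; have := ler0n R b; rewrite -natr1; lra.
exact: card_le_alliance_bound.
Qed.

End AllianceBound.

Theorem theorem3 (R : realType) (n : nat) (e : rel 'I_n) (lam : R) :
  simple_graph e -> is_spectral_radius e lam ->
  (Num.ceil (n%:R / (lam + 2)) <= (gamma_a e)%:Z) /\
  (Num.ceil (n%:R / (lam + 1)) <= (gamma_sa e)%:Z).
Proof.
move=> [e_sym _] lam_spec; split.
  apply: (@alliance_number_ge _ _ e_sym _ _ lam_spec 1%N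
            (global_defensive_alliance e)) => S.
  by case/andP => /andP [_ /forall_inP le_1] dom.
apply: (@alliance_number_ge _ _ e_sym _ _ lam_spec 0%N
          (global_strong_defensive_alliance e)) => S.
case/andP => /andP [_ /forall_inP le_0] dom; split => // v vS.
by rewrite addn0; apply: le_0.
Qed.
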